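(* Assume $\sum_kkq_k<2$ and that there is $R>1$ with $\sum_kR^kp_k<\infty$ and $\sum_kR^kq_k<\infty$. Let $z^*:=\inf\{z\in[1,2]:\Psi(z)=0\}$ with $\inf\emptyset=\infty$. Then $z^*\in[1,2]$, $\Psi(z^* )=0$, $\Phi(z^* )\ge0$, $\Phi(0)=\Psi(0)=0$, and $\Psi(z)\ge0$ for every $z\in[0,z^*]$. Furthermore, if there exists an odd number $k$ such that $q_k>0$, then $z^*<2$.
   Context: $\beta_{\mathrm o}\ge0$, $(p_k)_{k\ge0}$ a probability law on $\mathbb Z_+$, $\beta_{\mathrm c}>0$, $(q_k)_{k\ge0}$ a probability law on $\mathbb Z_+$, with the convention $p_1=q_2=0$. $\Phi(z):=\beta_{\mathrm o}\big(\sum_{k\ge0}p_k(1-z)^k-(1-z)\big)$ and $\Psi(z):=\beta_{\mathrm c}\big(\sum_{k\ge0}q_k(1-z)^k-(1-z)^2\big)$ for $z$ where the series converge absolutely. *)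

From Stdlib Require Import Reals.
From Coquelicot Require Import Coquelicot.
Open Scope R_scope.

Definition prob_law (p : nat -> R) : Prop :=
  (forall k, 0 <= p k) /\ is_series p 1.

(* Phi(z) = beta_o (sum_k p_k (1-z)^k - (1-z)) ; meaningful where the series
   converges absolutely (Series is the total Coquelicot sum operator). *)
Definition Phi (bo : R) (p : nat -> R) (z : R) : R :=
  bo * (Series (fun k => p k * (1 - z) ^ k) - (1 - z)).

Definition Psi (bc : R) (q : nat -> R) (z : R) : R :=
  bc * (Series (fun k => q k * (1 - z) ^ k) - (1 - z) ^ 2).

(* z* = inf { z in [1,2] : Psi(z) = 0 } in the extended reals;
   Glb_Rbar of the empty set is p_infty (inf emptyset = +oo). *)
Definition zstar (bc : R) (q : nat -> R) : Rbar :=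
  Glb_Rbar (fun z => 1 <= z <= 2 /\ Psi bc q z = 0).

From Stdlib Require Import Reals Lra Lia.
From Coquelicot Require Import Coquelicot.
Open Scope R_scope.

(* With G(x) = sum_k q_k x^k we have Psi(z) = beta_c (G(1-z) - (1-z)^2).
   Termwise x^k >= x^2 + (2-k) x (1-x) on [0,1], so a mean below 2 gives
   Psi >= 0 on [0,1]; likewise x^k >= x on [-1,0] gives Phi >= 0 on [1,2].
   Psi(1) = beta_c q_0 >= 0 and Psi(2) = beta_c (G(-1) - 1) <= 0, strictly if
   q charges an odd integer. As R > 1, G is continuous on [-1,1], so Psi has
   zeros in [1,2], the infimum of its zeros is a zero, and by the intermediate
   value theorem Psi cannot turn negative before it. The conventions
   p_1 = q_2 = 0 and the summability of R^k p_k are not needed. *)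

Lemma pow_unit_interval x n : 0 <= x <= 1 -> 0 <= x ^ n <= 1.
Proof.
  intros Hx; split; [now apply pow_le|].
  rewrite <- (pow1 n). apply pow_incr; lra.
Qed.

Lemma pow_ge_quadratic_bound x k :
  0 <= x <= 1 -> x ^ 2 + (2 - INR k) * x * (1 - x) <= x ^ k.
Proof.
  intros Hx. destruct k as [|[|k]]; [simpl; nra | simpl; nra |].
  rewrite !S_INR. induction k as [|k IH]; [simpl; nra|].
  rewrite S_INR. change (x ^ S (S (S k))) with (x * x ^ S (S k)).
  assert (Hk : 0 <= x ^ S (S k) <= x).
  { change (x ^ S (S k)) with (x * x ^ S k).
    pose proof (pow_unit_interval x (S k) Hx). nra. }
  nra.
Qed.

Lemma pow_ge_self_neg x k : -1 <= x <= 0 -> x <= x ^ k.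
Proof.
  intros Hx. destruct k as [|k]; [simpl; lra|].
  assert (Habs : Rabs (x ^ S k) <= - x).
  { rewrite <- RPow_abs, Rabs_left1 by lra. simpl.
    pose proof (pow_unit_interval (- x) k ltac:(lra)). nra. }
  apply Rabs_le_between in Habs. lra.
Qed.

Lemma Series_ge_0 (a : nat -> R) :
  (forall n, 0 <= a n) -> ex_series a -> 0 <= Series a.
Proof.
  intros Ha Ea.
  assert (H : Series (fun n => 0 * a n) <= Series a).
  { apply Series_le; [intros n; specialize (Ha n); lra | exact Ea]. }
  rewrite Series_scal_l in H. lra.
Qed.

Lemma Series_le_ex (a b : nat -> R) :
  ex_series a -> ex_series b -> (forall n, a n <= b n) -> Series a <= Series b.
Proof.
  intros Ea Eb Hab.
  assert (H : 0 <= Series (fun n => b n - a n)).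
  { apply Series_ge_0; [intros n; specialize (Hab n); lra|].
    exact (ex_series_minus b a Eb Ea). }
  rewrite Series_minus in H by assumption. lra.
Qed.

Lemma term_le_Series (a : nat -> R) j :
  (forall n, 0 <= a n) -> ex_series a -> a j <= Series a.
Proof.
  intros Ha Ea. rewrite (Series_incr_n a (S j)) by (lia || assumption). simpl pred.
  assert (Htail : 0 <= Series (fun k => a (S j + k)%nat)).
  { apply Series_ge_0; [intros; apply Ha|].
    exact (proj1 (ex_series_incr_n a (S j)) Ea). }
  assert (Hsum : a j <= sum_f_R0 a j).
  { destruct j; simpl; [lra|]. pose proof (cond_pos_sum a j Ha). lra. }
  lra.
Qed.

Section PowerSeries.

Variable a : nat -> R.
Hypothesis a_ge0 : forall k, 0 <= a k.

Lemma CV_disk_nonneg r : 0 <= r -> ex_series (fun k => r ^ k * a k) -> CV_disk a r.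
Proof.
  intros Hr E. eapply ex_series_ext; [|exact E]. intros n; simpl.
  rewrite Rabs_pos_eq; [ring|]. apply Rmult_le_pos; [apply a_ge0 | now apply pow_le].
Qed.

Lemma CV_radius_ge r : CV_disk a r -> Rbar_le r (CV_radius a).
Proof. intros Hr. now apply (proj1 (Lub_Rbar_correct (CV_disk a))). Qed.

Lemma ex_pseries_unit_disk x : ex_series a -> Rabs x <= 1 -> ex_pseries a x.
Proof.
  intros Ea Hx. apply CV_disk_correct, (CV_disk_le a x 1); [now rewrite Rabs_R1|].
  apply CV_disk_nonneg; [lra|]. eapply ex_series_ext; [|exact Ea].
  intros n; simpl; rewrite pow1; ring.
Qed.

Lemma continuity_pt_PSeries_unit_disk r x :
  1 < r -> ex_series (fun k => r ^ k * a k) -> Rabs x <= 1 ->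
  continuity_pt (PSeries a) x.
Proof.
  intros Hr E Hx. apply PSeries_continuity.
  pose proof (CV_radius_ge r (CV_disk_nonneg r ltac:(lra) E)) as Hrad.
  destruct (CV_radius a); simpl in *; lra || easy.
Qed.

End PowerSeries.

Section ProbabilityGeneratingFunction.

Variable q : nat -> R.
Hypothesis hq : prob_law q.

Lemma ex_pseries_prob x : Rabs x <= 1 -> ex_series (fun k => q k * x ^ k).
Proof.
  intros Hx. destruct hq as [q_ge0 q_sum].
  apply ex_pseries_R, ex_pseries_unit_disk; [exact q_ge0 | now exists 1 | exact Hx].
Qed.

Lemma PSeries_prob_1 : PSeries q 1 = 1.
Proof. rewrite PSeries_1. exact (is_series_unique _ _ (proj2 hq)). Qed.

Lemma PSeries_prob_ge_mean_bound s x :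
  is_series (fun k => INR k * q k) s -> 0 <= x <= 1 ->
  x ^ 2 + (2 - s) * x * (1 - x) <= PSeries q x.
Proof.
  intros Hs Hx. destruct hq as [q_ge0 q_sum].
  set (u := x ^ 2 + 2 * x * (1 - x)). set (v := x * (1 - x)).
  assert (Es : ex_series (fun k => INR k * q k)) by now exists s.
  assert (Elin : Series (fun k => u * q k - v * (INR k * q k)) = u - v * s).
  { rewrite Series_minus, !Series_scal_l, (is_series_unique _ _ q_sum),
      (is_series_unique _ _ Hs); [ring | |].
    - exact (ex_series_scal_l u q (ex_intro _ 1 q_sum)).
    - exact (ex_series_scal_l v _ Es). }
  replace (x ^ 2 + (2 - s) * x * (1 - x)) with (u - v * s) by (unfold u, v; ring).
  rewrite <- Elin. apply Series_le_ex.
  - exists (u - v * s). rewrite <- Elin. apply Series_correct.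
    apply (ex_series_minus (fun k => u * q k)).
    + exact (ex_series_scal_l u q (ex_intro _ 1 q_sum)).
    + exact (ex_series_scal_l v _ Es).
  - apply ex_pseries_prob. rewrite Rabs_pos_eq; lra.
  - intros k. pose proof (pow_ge_quadratic_bound x k Hx). pose proof (q_ge0 k).
    unfold u, v. nra.
Qed.

Lemma PSeries_prob_ge_self x : -1 <= x <= 0 -> x <= PSeries q x.
Proof.
  intros Hx. destruct hq as [q_ge0 q_sum].
  assert (Hlin : Series (fun k => x * q k) = x).
  { rewrite Series_scal_l, (is_series_unique _ _ q_sum). ring. }
  rewrite <- Hlin at 1. apply Series_le_ex.
  - exact (ex_series_scal_l x q (ex_intro _ 1 q_sum)).
  - apply ex_pseries_prob. rewrite Rabs_left1; lra.
  - intros k. pose proof (pow_ge_self_neg x k Hx). pose proof (q_ge0 k). nra.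
Qed.

Lemma PSeries_prob_neg1 :
  PSeries q (-1) <= 1 /\ ((exists k, Nat.Odd k /\ 0 < q k) -> PSeries q (-1) < 1).
Proof.
  destruct hq as [q_ge0 q_sum].
  set (d := fun k => q k - q k * (-1) ^ k).
  assert (Eq : ex_series q) by now exists 1.
  assert (Eneg : ex_series (fun k => q k * (-1) ^ k))
    by (apply ex_pseries_prob; rewrite Rabs_m1; lra).
  assert (Ed : ex_series d) by exact (ex_series_minus _ _ Eq Eneg).
  assert (Hd : Series d = 1 - PSeries q (-1)).
  { unfold d. rewrite Series_minus by assumption.
    now rewrite (is_series_unique _ _ q_sum). }
  assert (d_ge0 : forall k, 0 <= d k).
  { intros k. unfold d. pose proof (Rle_abs ((-1) ^ k)) as Hpow. rewrite pow_1_abs in Hpow.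
    pose proof (q_ge0 k). nra. }
  split.
  - pose proof (Series_ge_0 d d_ge0 Ed). lra.
  - intros [j [[m ->] Hqj]].
    assert (Hdj : d (2 * m + 1)%nat = 2 * q (2 * m + 1)%nat).
    { unfold d. replace (2 * m + 1)%nat with (S (2 * m)) by lia.
      rewrite pow_1_odd. ring. }
    pose proof (term_le_Series d (2 * m + 1) d_ge0 Ed). lra.
Qed.

End ProbabilityGeneratingFunction.

Lemma IVT_interv_weak (f : R -> R) x y :
  (forall t, x <= t <= y -> continuity_pt f t) -> x <= y -> 0 <= f x -> f y <= 0 ->
  exists z, x <= z <= y /\ f z = 0.
Proof.
  intros f_cont Hxy Hx Hy.
  destruct (Req_dec (f x) 0) as [Ex|Ex]; [exists x; split; [lra|exact Ex]|].
  destruct (Req_dec (f y) 0) as [Ey|Ey]; [exists y; split; [lra|exact Ey]|].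
  assert (Hlt : x < y).
  { destruct (Rle_lt_or_eq x y Hxy) as [Hlt|<-]; [exact Hlt | exfalso; lra]. }
  destruct (Ranalysis5.IVT_interv (fun t => - f t) x y) as [z [Hz Hfz]]; try lra.
  - intros t Ht. now apply continuity_pt_opp, f_cont.
  - exists z. split; [exact Hz | lra].
Qed.

Section FirstZero.

Variables (f : R -> R) (a b : R).
Hypothesis f_cont : forall x, a <= x <= b -> continuity_pt f x.

Lemma Glb_zeros_attained z0 : a <= z0 <= b -> f z0 = 0 ->
  exists zs, Glb_Rbar (fun z => a <= z <= b /\ f z = 0) = Finite zs /\
    a <= zs <= b /\ f zs = 0 /\
    (forall z, a <= z <= b -> f z = 0 -> zs <= z).
Proof.
  intros Hz0 Hfz0. set (Z := fun z => a <= z <= b /\ f z = 0).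
  destruct (Glb_Rbar_correct Z) as [lb glb].
  assert (La : Rbar_le a (Glb_Rbar Z)) by (apply glb; intros x [Hx _]; simpl; lra).
  assert (Lz0 : Rbar_le (Glb_Rbar Z) z0) by (apply lb; split; assumption).
  destruct (Glb_Rbar Z) as [zs| |]; simpl in La, Lz0; try contradiction.
  assert (Hzs : a <= zs <= b) by lra.
  assert (zs_lb : forall z, a <= z <= b -> f z = 0 -> zs <= z)
    by (intros z Hz Hfz; exact (lb z (conj Hz Hfz))).
  exists zs. repeat split; try lra; [|exact zs_lb].
  destruct (Req_dec (f zs) 0) as [E|E]; [exact E|exfalso].
  (* f has no zero within eps of zs, so zs + eps would be a larger lower bound. *)
  destruct (continuous_neq_0 f zs (f_cont zs Hzs) E) as [eps Heps].
  assert (Hlb : Rbar_le (zs + eps) zs).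
  { apply glb. intros x [Hx Hfx]. simpl.
    destruct (Rle_or_lt (zs + eps) x) as [Hle|Hlt]; [exact Hle|exfalso].
    pose proof (zs_lb x Hx Hfx).
    apply (Heps (x - zs)); [rewrite Rabs_pos_eq; lra|].
    now replace (zs + (x - zs)) with x by ring. }
  simpl in Hlb. pose proof (cond_pos eps). lra.
Qed.

Lemma nonneg_before_first_zero zs : 0 <= f a -> zs <= b -> f zs = 0 ->
  (forall z, a <= z <= b -> f z = 0 -> zs <= z) ->
  forall z, a <= z <= zs -> 0 <= f z.
Proof.
  intros Ha Hzsb Hfzs zs_lb z Hz.
  destruct (Rle_or_lt 0 (f z)) as [Hge|Hlt]; [exact Hge|exfalso].
  destruct (IVT_interv_weak f a z) as [w [Hw Hfw]]; try lra.
  { intros t Ht. apply f_cont. lra. }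
  pose proof (zs_lb w ltac:(lra) Hfw).
  assert (w = z) as -> by lra. lra.
Qed.

End FirstZero.

Section OffspringFunctions.

Variables (bo bc : R) (p q : nat -> R).

Lemma Psi_PSeries z : Psi bc q z = bc * (PSeries q (1 - z) - (1 - z) ^ 2).
Proof. reflexivity. Qed.

Lemma Phi_PSeries z : Phi bo p z = bo * (PSeries p (1 - z) - (1 - z)).
Proof. reflexivity. Qed.

Lemma Psi_0 : prob_law q -> Psi bc q 0 = 0.
Proof. intros hq. rewrite Psi_PSeries, Rminus_0_r, PSeries_prob_1 by exact hq. ring. Qed.

Lemma Phi_0 : prob_law p -> Phi bo p 0 = 0.
Proof. intros hp. rewrite Phi_PSeries, Rminus_0_r, PSeries_prob_1 by exact hp. ring. Qed.

Lemma Psi_1 : Psi bc q 1 = bc * q 0%nat.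
Proof. rewrite Psi_PSeries, Rminus_diag, PSeries_0. ring. Qed.

Lemma Psi_2 : 0 < bc -> prob_law q ->
  Psi bc q 2 <= 0 /\ ((exists k, Nat.Odd k /\ 0 < q k) -> Psi bc q 2 < 0).
Proof.
  intros hbc hq. rewrite Psi_PSeries. replace (1 - 2) with (-1) by ring.
  destruct (PSeries_prob_neg1 q hq) as [Hle Hlt]. split.
  - pose proof (Rmult_le_compat_l bc _ _ (Rlt_le _ _ hbc) Hle). simpl. nra.
  - intros Hodd. specialize (Hlt Hodd). simpl. nra.
Qed.

Lemma Psi_ge0_on_01 s : 0 <= bc -> prob_law q ->
  is_series (fun k => INR k * q k) s -> s < 2 ->
  forall z, 0 <= z <= 1 -> 0 <= Psi bc q z.
Proof.
  intros hbc hq Hs Hs2 z Hz. rewrite Psi_PSeries. apply Rmult_le_pos; [exact hbc|].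
  pose proof (PSeries_prob_ge_mean_bound q hq s (1 - z) Hs ltac:(lra)).
  assert (0 <= (2 - s) * (1 - z) * (1 - (1 - z))) by (apply Rmult_le_pos; nra).
  lra.
Qed.

Lemma Phi_ge0_on_12 : 0 <= bo -> prob_law p -> forall z, 1 <= z <= 2 -> 0 <= Phi bo p z.
Proof.
  intros hbo hp z Hz. rewrite Phi_PSeries. apply Rmult_le_pos; [exact hbo|].
  pose proof (PSeries_prob_ge_self p hp (1 - z) ltac:(lra)). lra.
Qed.

Lemma continuity_pt_Psi r : (forall k, 0 <= q k) -> 1 < r ->
  ex_series (fun k => r ^ k * q k) ->
  forall z, 0 <= z <= 2 -> continuity_pt (Psi bc q) z.
Proof.
  intros q_ge0 Hr E z Hz.
  change (continuity_pt (fun z => bc * (PSeries q (1 - z) - (1 - z) ^ 2)) z).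
  assert (Hlin : continuity_pt (fun z => 1 - z) z) by reg.
  apply continuity_pt_mult; [apply continuity_pt_const; intros ??; reflexivity|].
  apply continuity_pt_minus; [|reg].
  apply (continuity_pt_comp (fun z => 1 - z) (PSeries q) z Hlin).
  apply (continuity_pt_PSeries_unit_disk q q_ge0 r); [exact Hr | exact E |].
  apply Rabs_le; lra.
Qed.

End OffspringFunctions.

Theorem lemma3p1 (bo : R) (p : nat -> R) (bc : R) (q : nat -> R)
  (hbo : 0 <= bo) (hp : prob_law p) (hp1 : p 1%nat = 0)
  (hbc : 0 < bc) (hq : prob_law q) (hq2 : q 2%nat = 0)
  (hmean : exists s : R, is_series (fun k => INR k * q k) s /\ s < 2)
  (hR : exists R0 : R, 1 < R0 /\
        ex_series (fun k => R0 ^ k * p k) /\ ex_series (fun k => R0 ^ k * q k)) :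
  exists zs : R,
    zstar bc q = Finite zs /\ 1 <= zs <= 2 /\
    Psi bc q zs = 0 /\ 0 <= Phi bo p zs /\
    Phi bo p 0 = 0 /\ Psi bc q 0 = 0 /\
    (forall z, 0 <= z <= zs -> 0 <= Psi bc q z) /\
    ((exists k : nat, Nat.Odd k /\ 0 < q k) -> zs < 2).
Proof.
  destruct hmean as [s [Hs Hs2]]. destruct hR as [R0 [HR0 [_ ER0]]].
  assert (Psi_cont : forall z, 1 <= z <= 2 -> continuity_pt (Psi bc q) z).
  { intros z Hz. apply (continuity_pt_Psi bc q R0 (proj1 hq) HR0 ER0). lra. }
  assert (Psi1 : 0 <= Psi bc q 1) by (rewrite Psi_1; pose proof (proj1 hq 0%nat); nra).
  destruct (Psi_2 bc q hbc hq) as [Psi2 Psi2_odd].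
  destruct (IVT_interv_weak (Psi bc q) 1 2 Psi_cont) as [z0 [Hz0 Hfz0]]; try lra.
  destruct (Glb_zeros_attained (Psi bc q) 1 2 Psi_cont z0 Hz0 Hfz0)
    as [zs [Hglb [Hzs [Hzero zs_first]]]].
  exists zs. refine (conj Hglb (conj Hzs (conj Hzero _))).
  split; [now apply Phi_ge0_on_12|].
  split; [now apply Phi_0|].
  split; [now apply Psi_0|].
  split.
  - intros z Hz. destruct (Rle_or_lt z 1).
    + apply (Psi_ge0_on_01 bc q s); (lra || assumption).
    + apply (nonneg_before_first_zero (Psi bc q) 1 2 Psi_cont zs); (lra || assumption).
  - intros Hodd. specialize (Psi2_odd Hodd).
    destruct (Req_dec zs 2) as [->|]; lra.
Qed.
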